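(* Let $n\ge 1$ be an integer and consider the encrypted-cloning encoded state $\rho_{\mathrm{enc}}^{(n)}$ on the qubits $A,S_1,N_1,\dots,S_n,N_n$ (defined in the context). Let $\mathcal R_n=\{S_1,N_1,\dots,S_n,N_n\}$ be the storage register. Any subset $B\subset \mathcal R_n$ that misses a complete pair, i.e. such that $S_j\notin B$ and $N_j\notin B$ for some $j\in\{1,\dots,n\}$, is completely non-informative: the reduced state $\rho_B(\psi)$, obtained from $\rho_{\mathrm{enc}}^{(n)}$ by tracing out $A$ and all qubits of $\mathcal R_n\setminus B$, does not depend on the input state $\ket{\psi}$.
   Context: Pauli operators: $\sigma_0=I,\sigma_1=X,\sigma_2=Y,\sigma_3=Z$. An input qubit $A$ is prepared in an arbitrary pure state $\ket{\psi}_A$. For $i=1,\dots,n$, the signal qubit $S_i$ and noise qubit $N_i$ are prepared in the Bell state $\ket{\phi}_{S_iN_i}=\frac{1}{\sqrt2}(\ket{00}+\ket{11})$. Set $\alpha_0=1$, $\alpha_1=\alpha_3=i$, $\alpha_2=-i^{\,n+1}$, and define the unitary $U_{\mathrm{enc}}^{(n)}=\frac12\sum_{\mu=0}^3\alpha_\mu^{-1}\sigma_\mu^{(A)}\otimes\bigotimes_{i=1}^n\sigma_\mu^{(S_i)}$ (acting as identity on the $N_i$). The encoded state is $\ket{\Psi_{\mathrm{enc}}}=U_{\mathrm{enc}}^{(n)}\big[\ket{\psi}_A\otimes\bigotimes_{i=1}^n\ket{\phi}_{S_iN_i}\big]$ and $\rho_{\mathrm{enc}}^{(n)}=\ket{\Psi_{\mathrm{enc}}}\bra{\Psi_{\mathrm{enc}}}$.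 A subset $B$ of the storage register is called completely non-informative (completely uninformative) if its reduced state $\rho_B(\psi)$ is independent of $\ket{\psi}$. *)

From mathcomp Require Import all_boot all_order all_algebra.
Set Implicit Arguments. Unset Strict Implicit. Unset Printing Implicit Defensive.
Import Order.TTheory GRing.Theory Num.Theory.
Local Open Scope ring_scope.

(* Qubit labels: None = A, Some (j,false) = S_{j+1}, Some (j,true) = N_{j+1}. *)
Notation qubit n := (option ('I_n * bool)%type).
Definition qA (n : nat) : qubit n := None.
Definition qS (n : nat) (j : 'I_n) : qubit n := Some (j, false).
Definition qN (n : nat) (j : 'I_n) : qubit n := Some (j, true).

(* Computational basis states of the whole system A,S_1,N_1,...,S_n,N_n
   (false = |0>, true = |1>). *)
Notation config n := {ffun qubit n -> bool}.

(* Pauli matrices sigma_mu, entry (row a, column b). *)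
Definition pauli (C : numClosedFieldType) (mu : 'I_4) (a b : bool) : C :=
  match nat_of_ord mu with
  | 0 => (a == b)%:R
  | 1 => (a != b)%:R
  | 2 => if a == b then 0 else if a then 'i else - 'i
  | _ => if a == b then (if a then -1 else 1) else 0
  end.

Definition alpha (C : numClosedFieldType) (n : nat) (mu : 'I_4) : C :=
  match nat_of_ord mu with
  | 0 => 1
  | 2 => - 'i ^+ n.+1
  | _ => 'i
  end.

(* Single-site factor of sigma_mu^(A) (x) (x)_i sigma_mu^(S_i), identity on N_i. *)
Definition site_op (C : numClosedFieldType) (n : nat) (mu : 'I_4)
  (q : qubit n) (a b : bool) : C :=
  if q is Some (_, true) then (a == b)%:R else pauli C mu a b.

Definition Uenc (C : numClosedFieldType) (n : nat) (x y : config n) : C :=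
  2^-1 * \sum_(mu < 4) (alpha C n mu)^-1 *
           \prod_(q : qubit n) site_op C mu q (x q) (y q).

(* |psi>_A (x) (x)_i |phi>_{S_i N_i}, with |psi> = psi false |0> + psi true |1>. *)
Definition init_state (C : numClosedFieldType) (n : nat) (psi : bool -> C)
  (y : config n) : C :=
  psi (y (qA n)) * \prod_(j < n) ((y (qS j) == y (qN j))%:R / sqrtC 2).

Definition enc_state (C : numClosedFieldType) (n : nat) (psi : bool -> C)
  (x : config n) : C :=
  \sum_(y : config n) Uenc C x y * init_state psi y.

Definition rho_enc (C : numClosedFieldType) (n : nat) (psi : bool -> C)
  (x y : config n) : C :=
  enc_state psi x * (enc_state psi y)^*.

Definition merge (n : nat) (B : {set qubit n}) (x z : config n) : config n :=
  [ffun q => if q \in B then x q else z q].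

(* Entry (x,y) is <x_B| rho_B |y_B>; it depends only on x, y restricted to B;
   the sum runs over each configuration z of the complement exactly once. *)
Definition reduced (C : numClosedFieldType) (n : nat) (B : {set qubit n})
  (rho : config n -> config n -> C) (x y : config n) : C :=
  \sum_(z : config n | [forall q in B, ~~ z q]) rho (merge B x z) (merge B y z).

(* Each term sigma_mu^(A) (x) (x)_i sigma_mu^(S_i) of U_enc permutes the computational
   basis up to phases, so once the qubits A, S_j, N_j are set to a, s, t the amplitude
   of the encoded state is  sum_mu beta_mu * (sigma_mu psi)(a) * ((sigma_mu (x) 1) phi)(s,t),
   where beta_mu ([enc_coef]) only depends on the other qubits.  Tracing out A, S_j and N_j, the
   four Bell states (sigma_mu (x) 1)|phi> are orthonormal, which kills the cross terms
   mu <> nu, and sigma_mu psi has the norm of psi.  Hence the reduced state on any B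
   avoiding A, S_j, N_j is |psi|^2 times a quantity that does not involve psi. *)

From Pilot Require Import Defs.
From mathcomp Require Import all_boot all_order all_algebra ring.

Set Implicit Arguments. Unset Strict Implicit. Unset Printing Implicit Defensive.
Import Order.TTheory GRing.Theory Num.Theory.
Local Open Scope ring_scope.

Definition pauli_perm (mu : 'I_4) (b : bool) : bool :=
  if (val mu == 1%N) || (val mu == 2%N) then ~~ b else b.

Lemma pauli_permK mu : involutive (pauli_perm mu).
Proof. by rewrite /pauli_perm => b; case: (_ || _) => //; rewrite negbK. Qed.

Definition site_perm n (mu : 'I_4) (q : qubit n) (b : bool) : bool :=
  if q is Some (_, true) then b else pauli_perm mu b.

Definition pauli_shift n (mu : 'I_4) (w : config n) : config n :=
  [ffun q => site_perm mu q (w q)].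

Lemma pauli_shiftE n mu (w : config n) q : pauli_shift mu w q = site_perm mu q (w q).
Proof. exact: ffunE. Qed.

Section BitUpdate.
Variables (T : finType) (V : nmodType).

Definition upd_bit (z : {ffun T -> bool}) (q : T) (b : bool) : {ffun T -> bool} :=
  [ffun q' => if q' == q then b else z q'].

Lemma sum_upd_bit (P : pred {ffun T -> bool}) q (F : {ffun T -> bool} -> V) :
  (forall z b, P (upd_bit z q b) = P z) ->
  \sum_(z | P z) F z = \sum_(z | P z && ~~ z q) \sum_(b : bool) F (upd_bit z q b).
Proof.
move=> P_upd.
have toggleK : involutive (fun z => upd_bit z q (~~ z q)).
  move=> z; apply/ffunP => q'; rewrite !ffunE.
  by case: (q' =P q) => // ->; rewrite eqxx negbK.
rewrite [LHS](bigID (fun z : {ffun T -> bool} => z q)) /=.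
under [RHS]eq_bigr => z _ do rewrite big_bool.
rewrite big_split /=; congr (_ + _).
  rewrite (reindex_inj (inv_inj toggleK)); apply: eq_big => z.
    by rewrite P_upd ffunE eqxx.
  by move=> /andP[_]; rewrite ffunE eqxx => ->.
apply: eq_bigr => z /andP[_ z_q]; congr F; apply/ffunP => q'; rewrite ffunE.
by case: (q' =P q) => // ->; rewrite (negbTE z_q).
Qed.

Lemma forall_upd_bit (B : {set T}) z q b :
  q \notin B -> [forall q' in B, ~~ upd_bit z q b q'] = [forall q' in B, ~~ z q'].
Proof.
move=> q_notin; apply: eq_forallb => q'; rewrite ffunE.
by case: (q' =P q) => // ->; rewrite (negbTE q_notin).
Qed.

End BitUpdate.

Lemma qS_eqA n (j : 'I_n) : (qS j == qA n) = false. Proof. by []. Qed.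
Lemma qN_eqA n (j : 'I_n) : (qN j == qA n) = false. Proof. by []. Qed.
Lemma qS_eqN n (j j' : 'I_n) : (qS j == qN j') = false.
Proof. by rewrite (inj_eq Some_inj) xpair_eqE andbF. Qed.
Lemma qN_eqS n (j j' : 'I_n) : (qN j == qS j') = false.
Proof. by rewrite (inj_eq Some_inj) xpair_eqE andbF. Qed.
Lemma qS_eqS n (j j' : 'I_n) : (qS j == qS j') = (j == j').
Proof. by rewrite (inj_eq Some_inj) xpair_eqE andbT. Qed.
Lemma qN_eqN n (j j' : 'I_n) : (qN j == qN j') = (j == j').
Proof. by rewrite (inj_eq Some_inj) xpair_eqE andbT. Qed.

Definition set_ASN n (j : 'I_n) (z : config n) (a s t : bool) : config n :=
  upd_bit (upd_bit (upd_bit z (qN j) t) (qS j) s) (qA n) a.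

Lemma set_ASNE n (j : 'I_n) z a s t q :
  set_ASN j z a s t q =
  if q == qA n then a else if q == qS j then s else if q == qN j then t else z q.
Proof. by rewrite !ffunE. Qed.

Section OutsideB.
Variables (n : nat) (j : 'I_n) (B : {set qubit n}).
Hypotheses (A_notin : qA n \notin B) (Sj_notin : qS j \notin B) (Nj_notin : qN j \notin B).

Lemma sum_set_ASN (V : nmodType) (F : config n -> V) :
  \sum_(z : config n | [forall q in B, ~~ z q]) F z =
  \sum_(z : config n | [forall q in B, ~~ z q] && ~~ z (qA n) && ~~ z (qS j) && ~~ z (qN j))
     \sum_(t : bool) \sum_(s : bool) \sum_(a : bool) F (set_ASN j z a s t).
Proof.
rewrite (@sum_upd_bit _ _ _ (qA n)) => [|z b]; last by rewrite forall_upd_bit.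
rewrite (@sum_upd_bit _ _ _ (qS j)) => [|z b]; last first.
  by rewrite forall_upd_bit // ffunE eq_sym qS_eqA.
rewrite (@sum_upd_bit _ _ _ (qN j)) => [//|z b].
by rewrite forall_upd_bit // !ffunE eq_sym qN_eqA eq_sym qN_eqS.
Qed.

Lemma merge_set_ASN (x z : config n) a s t :
  Defs.merge B x (set_ASN j z a s t) = set_ASN j (Defs.merge B x z) a s t.
Proof.
apply/ffunP => q; rewrite !set_ASNE !ffunE.
case: ifP => // q_in.
by rewrite (negbTE (memPn A_notin _ q_in)) (negbTE (memPn Sj_notin _ q_in))
  (negbTE (memPn Nj_notin _ q_in)).
Qed.

End OutsideB.

Section Encoding.
Variable C : numClosedFieldType.

Lemma pauli_eq0 mu a b : b != pauli_perm mu a -> pauli C mu a b = 0.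
Proof. by case: mu => -[|[|[|[|//]]]] ? /=; case: a; case: b. Qed.

Lemma pauli_adj mu a b : (pauli C mu a b)^* = pauli C mu b a.
Proof.
case: mu => -[|[|[|[|//]]]] ?; case: a; case: b;
  by rewrite /pauli /= ?rmorphN ?rmorph0 ?rmorph1 ?conjC_nat /= ?conjCi ?opprK.
Qed.

Lemma pauli_perm_normK mu a :
  pauli C mu a (pauli_perm mu a) * (pauli C mu a (pauli_perm mu a))^* = 1.
Proof.
rewrite -normCK; case: mu => -[|[|[|[|//]]]] ?; case: a;
  by rewrite /pauli /pauli_perm /= ?normrN ?normCi ?(@normr1 C) ?normr_nat ?mulr1n
    (@expr1n C).
Qed.

Lemma site_op_eq0 n mu (q : qubit n) a b :
  b != site_perm mu q a -> site_op C mu q a b = 0.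
Proof. by case: q => [[j []]|] /=; [case: a; case: b | exact: pauli_eq0..]. Qed.

Lemma sum_prod_site_op n mu (v : config n) (G : config n -> C) :
  \sum_(y : config n) (\prod_(q : qubit n) site_op C mu q (v q) (y q)) * G y =
  (\prod_(q : qubit n) site_op C mu q (v q) (pauli_shift mu v q)) * G (pauli_shift mu v).
Proof.
rewrite (bigD1 (pauli_shift mu v)) //= [X in _ + X]big1 ?addr0 // => y y_neq.
have /existsP[q y_q_neq] : [exists q, y q != pauli_shift mu v q].
  by apply: contra_neqT y_neq => /existsPn y_eq; apply/ffunP => q; apply/eqP/negPn/y_eq.
by rewrite pauli_shiftE in y_q_neq; rewrite (bigD1 q) //= site_op_eq0 ?mul0r.
Qed.

Lemma enc_stateE n (psi : bool -> C) (v : config n) :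
  enc_state psi v = \sum_(mu < 4) 2^-1 * (alpha C n mu)^-1 *
    ((\prod_(q : qubit n) site_op C mu q (v q) (pauli_shift mu v q)) *
     init_state psi (pauli_shift mu v)).
Proof.
rewrite /enc_state /Uenc.
under eq_bigr => y _ do rewrite mulr_sumr mulr_suml.
rewrite exchange_big; apply: eq_bigr => mu _.
by rewrite -sum_prod_site_op mulr_sumr; apply: eq_bigr => y _; rewrite !mulrA.
Qed.

(* [pauli_apply psi mu] is the vector sigma_mu psi, and [bell_amp mu] is sqrt 2 times
   the Bell state (sigma_mu (x) 1)|phi>. *)
Definition pauli_apply (psi : bool -> C) (mu : 'I_4) (a : bool) : C :=
  pauli C mu a (pauli_perm mu a) * psi (pauli_perm mu a).

Definition bell_amp (mu : 'I_4) (s t : bool) : C :=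
  pauli C mu s (pauli_perm mu s) * (pauli_perm mu s == t)%:R.

Definition enc_coef n (j : 'I_n) (mu : 'I_4) (v : config n) : C :=
  2^-1 * (alpha C n mu)^-1 *
  ((\prod_(q | (q != qA n) && (q != qS j) && (q != qN j))
       site_op C mu q (v q) (site_perm mu q (v q))) *
   (\prod_(j' | j' != j) ((pauli_perm mu (v (qS j')) == v (qN j'))%:R / sqrtC 2))
   / sqrtC 2).

Lemma enc_state_set_ASN n (j : 'I_n) (psi : bool -> C) v a s t :
  enc_state psi (set_ASN j v a s t) =
  \sum_(mu < 4) enc_coef j mu v * (pauli_apply psi mu a * bell_amp mu s t).
Proof.
rewrite enc_stateE; apply: eq_bigr => mu _.
rewrite /init_state /enc_coef /pauli_apply /bell_amp.
rewrite (bigD1 (qA n)) //= (bigD1 (qS j)) //= (bigD1 (qN j)) /=; last first.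
  by rewrite qN_eqS.
rewrite (bigD1 j) //= !pauli_shiftE !set_ASNE !eqxx qS_eqA qN_eqA qN_eqS /=.
have -> : \prod_(q | (q != qA n) && (q != qS j) && (q != qN j))
        site_op C mu q (set_ASN j v a s t q) (pauli_shift mu (set_ASN j v a s t) q) =
   \prod_(q | (q != qA n) && (q != qS j) && (q != qN j))
        site_op C mu q (v q) (site_perm mu q (v q)).
  apply: eq_bigr => q /andP[/andP[/negbTE q_A /negbTE q_S] /negbTE q_N].
  by rewrite pauli_shiftE set_ASNE q_A q_S q_N.
have -> : \prod_(j' < n | j' != j)
    ((pauli_shift mu (set_ASN j v a s t) (qS j') ==
      pauli_shift mu (set_ASN j v a s t) (qN j'))%:R / sqrtC 2 : C) =
   \prod_(j' < n | j' != j) ((pauli_perm mu (v (qS j')) == v (qN j'))%:R / sqrtC 2).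
  apply: eq_bigr => j' /negbTE j'_j.
  by rewrite !pauli_shiftE !set_ASNE qS_eqA qN_eqA qS_eqS qN_eqN qS_eqN qN_eqS j'_j.
ring.
Qed.

Lemma norm_pauli_apply (psi : bool -> C) mu :
  \sum_(a : bool) pauli_apply psi mu a * (pauli_apply psi mu a)^* =
  \sum_(b : bool) psi b * (psi b)^*.
Proof.
rewrite [RHS](reindex_inj (inv_inj (pauli_permK mu))); apply: eq_bigr => a _.
by rewrite /pauli_apply rmorphM mulrACA pauli_perm_normK mul1r.
Qed.

Lemma bell_amp_orthogonal (mu nu : 'I_4) :
  \sum_(t : bool) \sum_(s : bool) bell_amp mu s t * (bell_amp nu s t)^* =
  2 * (mu == nu)%:R.
Proof.
have mulii : 'i * 'i = -1 :> C by rewrite -expr2 sqrCi.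
case: mu => -[|[|[|[|//]]]] ?; case: nu => -[|[|[|[|//]]]] ?;
  rewrite /bell_amp !big_bool /= !rmorphM /= !pauli_adj ?conjC_nat /pauli /pauli_perm /=;
  ring: mulii.
Qed.

Lemma sum_local_factor (be be' : 'I_4 -> C) (psi : bool -> C) :
  \sum_(t : bool) \sum_(s : bool) \sum_(a : bool)
    (\sum_(mu < 4) be mu * (pauli_apply psi mu a * bell_amp mu s t)) *
    (\sum_(nu < 4) be' nu * (pauli_apply psi nu a * bell_amp nu s t))^* =
  2 * (\sum_(b : bool) psi b * (psi b)^*) * \sum_(mu < 4) be mu * (be' mu)^*.
Proof.
have expand a s t :
  (\sum_(mu < 4) be mu * (pauli_apply psi mu a * bell_amp mu s t)) *
  (\sum_(nu < 4) be' nu * (pauli_apply psi nu a * bell_amp nu s t))^* =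
  \sum_(mu < 4) \sum_(nu < 4) be mu * (be' nu)^* *
    (pauli_apply psi mu a * (pauli_apply psi nu a)^*) *
    (bell_amp mu s t * (bell_amp nu s t)^*).
  rewrite rmorph_sum mulr_suml; apply: eq_bigr => mu _.
  by rewrite mulr_sumr; apply: eq_bigr => nu _; rewrite !rmorphM; ring.
transitivity (\sum_(mu < 4) \sum_(nu < 4) be mu * (be' nu)^* *
    (\sum_(a : bool) pauli_apply psi mu a * (pauli_apply psi nu a)^*) *
    (\sum_(t : bool) \sum_(s : bool) bell_amp mu s t * (bell_amp nu s t)^*)).
  under eq_bigr => t _ do under eq_bigr => s _ do under eq_bigr => a _ do rewrite expand.
  rewrite !big_bool /= -!big_split; apply: eq_bigr => mu _.
  by rewrite -!big_split; apply: eq_bigr => nu _; rewrite !big_bool /=; ring.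
rewrite mulr_sumr; apply: eq_bigr => mu _.
rewrite (bigD1 mu) //= [X in _ + X]big1 => [|nu nu_neq]; last first.
  by rewrite bell_amp_orthogonal eq_sym (negbTE nu_neq) mulr0n !mulr0.
by rewrite (bell_amp_orthogonal mu mu) eqxx mulr1n norm_pauli_apply addr0; ring.
Qed.

Lemma reduced_rho_encE n (B : {set qubit n}) (j : 'I_n) :
  qA n \notin B -> qS j \notin B -> qN j \notin B ->
  forall (psi : bool -> C) x y,
  reduced B (rho_enc psi) x y =
  2 * (\sum_(b : bool) psi b * (psi b)^*) *
  \sum_(z : config n | [forall q in B, ~~ z q] && ~~ z (qA n) && ~~ z (qS j) && ~~ z (qN j))
    \sum_(mu < 4) enc_coef j mu (Defs.merge B x z) * (enc_coef j mu (Defs.merge B y z))^*.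
Proof.
move=> A_notin Sj_notin Nj_notin psi x y.
rewrite /reduced (sum_set_ASN A_notin Sj_notin Nj_notin) mulr_sumr.
apply: eq_bigr => z _; rewrite -sum_local_factor.
apply: eq_bigr => t _; apply: eq_bigr => s _; apply: eq_bigr => a _.
by rewrite /rho_enc !merge_set_ASN // !enc_state_set_ASN.
Qed.

End Encoding.

Theorem proposition1 (C : numClosedFieldType) (n : nat) (B : {set qubit n}) :
  (0 < n)%N ->
  qA n \notin B ->
  (exists j : 'I_n, qS j \notin B /\ qN j \notin B) ->
  forall psi1 psi2 : bool -> C,
    \sum_(b : bool) psi1 b * (psi1 b)^* = 1 ->
    \sum_(b : bool) psi2 b * (psi2 b)^* = 1 ->
    forall x y : config n,
      reduced B (rho_enc psi1) x y = reduced B (rho_enc psi2) x y.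
Proof.
move=> _ A_notin [j [Sj_notin Nj_notin]] psi1 psi2 norm_psi1 norm_psi2 x y.
by rewrite !(reduced_rho_encE A_notin Sj_notin Nj_notin) norm_psi1 norm_psi2.
Qed.
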